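(* Let $(G,k)$ be an instance of \textsc{Bicolored $P_3$ Deletion} and let $u,v,w,z$ be vertices such that $G[\{u,v,w,z\}]$ is an LC-Diamond, an LO-Diamond, or an IIZ-Diamond (with the vertex labels as in the definitions). Then $(G,k)$ is a yes-instance if and only if at least one of $(G-\{v,w\},k-1)$, $(G-\{\{u,v\},\{u,z\}\},k-2)$, $(G-\{\{u,v\},\{v,z\},\{w,z\}\},k-3)$ is a yes-instance.
   Context: A two-colored graph $G=(V,E_r,E_b)$ is a finite simple undirected graph whose edge set $E=E_r\uplus E_b$ is partitioned into red and blue edges; $G-F$ removes the edges in $F$ (and $G-\{v,w\}$ removes the single edge $\{v,w\}$). A bicolored $P_3$ is an induced subgraph on three vertices $a,b,c$ with edges $\{a,b\},\{b,c\}$ of different colors and $\{a,c\}\notin E$. The following are defined up to swapping the two colors (both versions count). An LC-Diamond on $u,v,w,z$: edges exactly $\{u,v\}$ blue, $\{v,w\}$ red, $\{u,z\}$ blue, $\{v,z\}$ red, $\{w,z\}$ blue. An LO-Diamond on $u,v,w,z$: edges exactly $\{u,v\}$ blue, $\{v,w\}$ red, $\{u,z\}$ blue, $\{v,z\}$ blue, $\{w,z\}$ red. An IIZ-Diamond on $u,v,w,z$: edges exactly $\{u,v\}$ blue, $\{v,w\}$ red, $\{u,z\}$ red, $\{v,z\}$ blue, $\{w,z\}$ blue. \textsc{Bicolored $P_3$ Deletion}: given $G$ and an integer $k$, decide whether some $S\subseteq E$ with $|S|\le k$ makes $G-S$ free of induced bicolored $P_3$s (no-instance if $k<0$). *)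

(* A two-colored graph on a finite vertex type V is given by
   two sets of edges Er (red) and Eb (blue); an edge is a 2-element set. *)
From mathcomp Require Import all_boot all_order ssralg ssrnum ssrint.
Set Implicit Arguments. Unset Strict Implicit. Unset Printing Implicit Defensive.
Import Order.TTheory GRing.Theory Num.Theory.

Section Defs.
Variable V : finType.
Implicit Types (Er Eb F : {set {set V}}) (u v w z a b c : V).

Definition two_colored Er Eb : Prop :=
  (forall e, e \in Er :|: Eb -> #|e| = 2) /\ [disjoint Er & Eb].

Definition edge (E : {set {set V}}) a b : bool := [set a; b] \in E.

(* G - F is represented as (Er :\: F, Eb :\: F). *)

Definition bicolored_P3 Er Eb a b c : Prop :=
  [/\ a != b, b != c, a != c,
      (edge Er a b && edge Eb b c) || (edge Eb a b && edge Er b c)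
    & ~~ edge (Er :|: Eb) a c].

Definition P3_free Er Eb : Prop := forall a b c, ~ bicolored_P3 Er Eb a b c.

Definition yes_instance Er Eb (k : int) : Prop :=
  exists S : {set {set V}},
    [/\ S \subset Er :|: Eb, (#|S|%:Z <= k)%R & P3_free (Er :\: S) (Eb :\: S)].

Definition distinct4 u v w z : bool :=
  [&& u != v, u != w, u != z, v != w, v != z & w != z].

(* Diamonds with colors "B" (blue) and "R" (red) as given; the swapped
   version is obtained by exchanging the arguments. {u,w} is a non-edge. *)
Definition LC_diamond R B u v w z : Prop :=
  [/\ distinct4 u v w z, ~~ edge (R :|: B) u w &
      [/\ edge B u v, edge R v w, edge B u z,
      edge R v z & edge B w z]].

Definition LO_diamond R B u v w z : Prop :=
  [/\ distinct4 u v w z, ~~ edge (R :|: B) u w &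
      [/\ edge B u v, edge R v w, edge B u z,
      edge B v z & edge R w z]].

Definition IIZ_diamond R B u v w z : Prop :=
  [/\ distinct4 u v w z, ~~ edge (R :|: B) u w &
      [/\ edge B u v, edge R v w, edge R u z,
      edge B v z & edge B w z]].

Definition some_diamond Er Eb u v w z : Prop :=
  [\/ LC_diamond Er Eb u v w z \/ LC_diamond Eb Er u v w z,
      LO_diamond Er Eb u v w z \/ LO_diamond Eb Er u v w z
    | IIZ_diamond Er Eb u v w z \/ IIZ_diamond Eb Er u v w z].

End Defs.

(* A deletion set S that leaves no bicolored P3 is forced through a diamond
   step by step: the P3 u-v-w makes S contain {u,v} or {v,w}; once {u,v} is in
   S it is a non-edge of G - S, which turns a second two-colored path through z
   into a P3, and so on.  Hence S contains {v,w}, or {u,v} and {u,z}, or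
   {u,v}, {v,z} and {w,z}, so branching on these three edge sets is exact. *)

From mathcomp Require Import all_boot all_order ssralg ssrnum ssrint.
From mathcomp Require Import zify.
Set Implicit Arguments. Unset Strict Implicit. Unset Printing Implicit Defensive.
Import Order.TTheory GRing.Theory Num.Theory.

Lemma exists2_in3 (T : eqType) (P : T -> Prop) (x y z : T) :
  (exists2 t, t \in [:: x; y; z] & P t) <-> [\/ P x, P y | P z].
Proof.
split=> [[t] | [] Pt].
- by rewrite !inE => /or3P[] /eqP-> Pt; [constructor 1 | constructor 2 | constructor 3].
- by exists x; rewrite ?inE ?eqxx.
- by exists y; rewrite ?inE ?eqxx ?orbT.
- by exists z; rewrite ?inE ?eqxx ?orbT.
Qed.

Section BicoloredP3Deletion.
Variable V : finType.
Implicit Types (Er Eb R B E F S : {set {set V}}) (a b c u v w z : V).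

Lemma set2C a b : [set a; b] = [set b; a].
Proof. exact: setUC. Qed.

Lemma set2_neq a b c d : a \notin [set c; d] -> [set a; b] != [set c; d].
Proof. by apply: contra => /eqP <-; rewrite !inE eqxx. Qed.

Lemma edgeC E a b : edge E a b = edge E b a.
Proof. by rewrite /edge set2C. Qed.

Lemma edgeD_removed E S a b : [set a; b] \in S -> ~~ edge (E :\: S) a b.
Proof. by rewrite /edge inE => ->. Qed.

Lemma edgeD_nonedge E S a b : ~~ edge E a b -> ~~ edge (E :\: S) a b.
Proof. by rewrite /edge inE negb_and => ->; rewrite orbT. Qed.

Definition bicolored R B a b c : bool :=
  (edge R a b && edge B b c) || (edge B a b && edge R b c).

Lemma P3_freeC R B : P3_free R B -> P3_free B R.
Proof.
move=> free a b c [ab bc ac col nac]; apply: (free a b c).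
by split=> //; [rewrite orbC | rewrite setUC].
Qed.

Lemma P3_free_hit R B S a b c :
  P3_free (R :\: S) (B :\: S) -> a != b -> b != c -> a != c ->
  bicolored R B a b c -> ~~ edge ((R :|: B) :\: S) a c ->
  [set a; b] \in S \/ [set b; c] \in S.
Proof.
move=> free ab bc ac col nac.
case abS: ([set a; b] \in S); first by left.
case bcS: ([set b; c] \in S); first by right.
case: (free a b c); split=> //; last by rewrite -setDUl.
by move: col; rewrite /bicolored /edge !inE abS bcS.
Qed.

Lemma yes_instance_setD Er Eb k F S :
  S \subset Er :|: Eb -> (#|S|%:Z <= k)%R -> P3_free (Er :\: S) (Eb :\: S) ->
  F \subset S -> yes_instance (Er :\: F) (Eb :\: F) (k - #|F|%:Z)%R.
Proof.
move=> SE Sk free FS; have SFS : F :|: (S :\: F) = S by rewrite -{1}(setIidPr FS) setID.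
exists (S :\: F); split.
- by rewrite -setDUl setSD.
- by move: Sk (cardsDS FS) (subset_leq_card FS); lia.
- by rewrite !setDDl SFS.
Qed.

Lemma yes_instance_of_setD Er Eb k F :
  F \subset Er :|: Eb -> yes_instance (Er :\: F) (Eb :\: F) (k - #|F|%:Z)%R ->
  yes_instance Er Eb k.
Proof.
move=> FE [S [SE Sk free]]; exists (F :|: S); split.
- by rewrite subUset FE (subset_trans SE) // -setDUl subsetDl.
- by move: Sk (cardsUI F S); lia.
- by rewrite -!setDDl.
Qed.

Lemma yes_instance_branching Er Eb k (Fs : seq {set {set V}}) :
  (forall F, F \in Fs -> F \subset Er :|: Eb) ->
  (forall S, P3_free (Er :\: S) (Eb :\: S) -> exists2 F, F \in Fs & F \subset S) ->
  yes_instance Er Eb k <->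
  exists2 F, F \in Fs & yes_instance (Er :\: F) (Eb :\: F) (k - #|F|%:Z)%R.
Proof.
move=> FsE forced; split=> [[S [SE Sk free]] | [F FFs yesF]].
  by have [F FFs FS] := forced S free; exists F => //; apply: yes_instance_setD SE Sk free FS.
exact: yes_instance_of_setD (FsE F FFs) yesF.
Qed.

Definition contains_diamond_branch S u v w z : Prop :=
  [\/ [set v; w] \in S, [set u; v] \in S /\ [set u; z] \in S
    | [/\ [set u; v] \in S, [set v; z] \in S & [set w; z] \in S]].

Section ForcedBranch.
Variables (R B S : {set {set V}}) (u v w z : V).
Hypotheses (free : P3_free (R :\: S) (B :\: S)) (distinct : distinct4 u v w z).
Hypotheses (nuw : ~~ edge (R :|: B) u w) (uvw : bicolored R B u v w).

Lemma forces_branch_via_uzv :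
  bicolored R B u z v -> bicolored R B v w z -> contains_diamond_branch S u v w z.
Proof.
move=> uzv vwz; case/and5P: distinct => uv uw uz vw /andP[vz wz].
have [uvS|vwS] := P3_free_hit free uv vw uw uvw (edgeD_nonedge _ nuw);
  last by constructor 1.
have zv : z != v by rewrite eq_sym.
have [uzS|] := P3_free_hit free uz zv uv uzv (edgeD_removed _ uvS);
  first by constructor 2.
rewrite set2C => vzS.
have [vwS|wzS] := P3_free_hit free vw wz vz vwz (edgeD_removed _ vzS);
  by [constructor 1 | constructor 3].
Qed.

Lemma forces_branch_via_uzw :
  bicolored R B u z w -> bicolored R B w v z -> contains_diamond_branch S u v w z.
Proof.
move=> uzw wvz; case/and5P: distinct => uv uw uz vw /andP[vz wz].
have [uvS|vwS] := P3_free_hit free uv vw uw uvw (edgeD_nonedge _ nuw);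
  last by constructor 1.
have [zw wv] : z != w /\ w != v by split; rewrite eq_sym.
have [uzS|] := P3_free_hit free uz zw uw uzw (edgeD_nonedge _ nuw);
  first by constructor 2.
rewrite set2C => wzS.
have [|vzS] := P3_free_hit free wv vz wz wvz (edgeD_removed _ wzS).
  by rewrite set2C; constructor 1.
by constructor 3.
Qed.

End ForcedBranch.

Definition diamond R B u v w z : Prop :=
  [\/ LC_diamond R B u v w z, LO_diamond R B u v w z | IIZ_diamond R B u v w z].

Lemma diamond_forces_branch R B S u v w z :
  P3_free (R :\: S) (B :\: S) -> diamond R B u v w z ->
  contains_diamond_branch S u v w z.
Proof.
move=> free [] [distinct nuw [uv vw uz vz wz]];
  [apply: forces_branch_via_uzv | apply: forces_branch_via_uzw
  | apply: forces_branch_via_uzv] => //;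
  by rewrite /bicolored ?(edgeC _ z v) ?(edgeC _ z w) ?(edgeC _ w v) ?uv ?vw ?uz ?vz ?wz ?orbT.
Qed.

Lemma diamond_edges R B u v w z : diamond R B u v w z ->
  [set [set u; v]; [set v; w]; [set u; z]; [set v; z]; [set w; z]] \subset R :|: B.
Proof.
case=> -[_ _]; rewrite /edge => -[uv vw uz vz wz].
all: by rewrite !subUset !sub1set !inE ?uv ?vw ?uz ?vz ?wz ?orbT.
Qed.

Lemma some_diamond_cases Er Eb u v w z :
  some_diamond Er Eb u v w z -> diamond Er Eb u v w z \/ diamond Eb Er u v w z.
Proof.
by case=> -[] D; [left; constructor 1 | right; constructor 1 | left; constructor 2
  | right; constructor 2 | left; constructor 3 | right; constructor 3].
Qed.

Lemma some_diamond_distinct Er Eb u v w z :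
  some_diamond Er Eb u v w z -> distinct4 u v w z.
Proof. by case=> -[] []. Qed.

Lemma some_diamond_edges Er Eb u v w z : some_diamond Er Eb u v w z ->
  [set [set u; v]; [set v; w]; [set u; z]; [set v; z]; [set w; z]] \subset Er :|: Eb.
Proof. by case/some_diamond_cases => /diamond_edges //; rewrite (setUC Eb). Qed.

Lemma some_diamond_forces_branch Er Eb S u v w z :
  some_diamond Er Eb u v w z -> P3_free (Er :\: S) (Eb :\: S) ->
  contains_diamond_branch S u v w z.
Proof.
move=> /some_diamond_cases[] D free; first exact: diamond_forces_branch free D.
exact: diamond_forces_branch (P3_freeC free) D.
Qed.

Definition diamond_branches u v w z : seq {set {set V}} :=
  [:: [set [set v; w]]; [set [set u; v]; [set u; z]];
      [set [set u; v]; [set v; z]; [set w; z]]].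

Lemma diamond_branch_subset S u v w z : contains_diamond_branch S u v w z ->
  exists2 F, F \in diamond_branches u v w z & F \subset S.
Proof.
case=> [vwS | [uvS uzS] | [uvS vzS wzS]];
  [exists [set [set v; w]] | exists [set [set u; v]; [set u; z]]
  | exists [set [set u; v]; [set v; z]; [set w; z]]];
  by rewrite ?inE ?eqxx ?orbT // ?subUset ?sub1set ?vwS ?uvS ?uzS ?vzS ?wzS.
Qed.

Lemma diamond_branches_sub u v w z F : F \in diamond_branches u v w z ->
  F \subset [set [set u; v]; [set v; w]; [set u; z]; [set v; z]; [set w; z]].
Proof. by rewrite !inE => /or3P[] /eqP->; rewrite ?subUset !sub1set !inE ?eqxx ?orbT. Qed.

Lemma card_diamond_branches u v w z : distinct4 u v w z ->
  [/\ #|[set [set v; w]]| = 1, #|[set [set u; v]; [set u; z]]| = 2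
    & #|[set [set u; v]; [set v; z]; [set w; z]]| = 3]%N.
Proof.
case/and5P=> uv uw uz vw /andP[vz wz]; split; first exact: cards1.
  by rewrite cards2 (set2C u v) set2_neq // !inE negb_or eq_sym uv vz.
have wz_uv : [set w; z] != [set u; v] by rewrite set2_neq // !inE negb_or !(eq_sym w) uw vw.
have wz_vz : [set w; z] != [set v; z] by rewrite set2_neq // !inE negb_or (eq_sym w) vw wz.
have uv_vz : [set u; v] != [set v; z] by rewrite set2_neq // !inE negb_or uv uz.
by rewrite setUC cardsU1 cards2 !inE negb_or wz_uv wz_vz uv_vz.
Qed.

End BicoloredP3Deletion.

Theorem lemma6 (V : finType) (Er Eb : {set {set V}}) (k : int) (u v w z : V) :
  two_colored Er Eb ->
  some_diamond Er Eb u v w z ->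
  (yes_instance Er Eb k <->
   [\/ (let F := [set [set v; w]] in
        yes_instance (Er :\: F) (Eb :\: F) (k - 1)%R),
       (let F := [set [set u; v]; [set u; z]] in
        yes_instance (Er :\: F) (Eb :\: F) (k - 2)%R)
     | (let F := [set [set u; v]; [set v; z]; [set w; z]] in
        yes_instance (Er :\: F) (Eb :\: F) (k - 3)%R)]).
Proof.
(* The argument never uses that edges are 2-sets or that the colors are disjoint. *)
move=> _ D; rewrite (yes_instance_branching k (Fs := diamond_branches u v w z)).
- have [c1 c2 c3] := card_diamond_branches (some_diamond_distinct D).
  by rewrite exists2_in3 c1 c2 c3.
- by move=> F /diamond_branches_sub /subset_trans; apply; exact: some_diamond_edges D.
- by move=> S /(some_diamond_forces_branch D) /diamond_branch_subset.
Qed.
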